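(* Let $\mathcal C$ be a braided monoidal category satisfying properties (1), (3), (4* ), (5), (5* ), (8) and (10) below. Let $A,B$ be $\Omega$-magmas in $\mathcal C$ and let $\rho_U\colon A\to B\otimes U$ be a tensor epimorphism for some object $U$. Let $\mathcal D$ be the full subcategory of $\mathbf{Comeas}(A,B)$ consisting of all comeasurings $\rho\colon A\to B\otimes Q$ for which there exists a morphism $\tau\colon U\to Q$ in $\mathcal C$ with $(\mathrm{id}_B\otimes\tau)\rho_U=\rho$. If $\mathcal D$ is nonempty, then $\mathcal D$ has an initial object.
   Context: Fix a set $\Omega$ with maps $s,t\colon\Omega\to\mathbb Z_{\ge0}$. An $\Omega$-magma in a monoidal category is an object $A$ with morphisms $\omega_A\colon A^{\otimes s(\omega)}\to A^{\otimes t(\omega)}$ for $\omega\in\Omega$ (with $A^{\otimes0}=\mathbbm 1$; no axioms). For a monoid $(Q,\mu,u)$ in a braided monoidal category with braiding $c$ and morphisms $\rho_i\colon A_i\to B_i\otimes Q$, put $\rho_1\tilde\otimes\rho_2:=(\mathrm{id}_{B_1\otimes B_2}\otimes\mu)(\mathrm{id}_{B_1}\otimes c_{Q,B_2}\otimes\mathrm{id}_Q)(\rho_1\otimes\rho_2)$ (associators suppressed); define $\rho^{\tilde\otimes n}$ by iteration, with $\rho^{\tilde\otimes0}$ the composite $\mathbbm 1\xrightarrow{u}Q\cong\mathbbm 1\otimes Q$. A comeasuring from $A$ to $B$ is a morphism $\rho\colon A\to B\otimes Q$, $Q$ a monoid, with $(\omega_B\otimes\mathrm{id}_Q)\rho^{\tilde\otimes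 s(\omega)}=\rho^{\tilde\otimes t(\omega)}\omega_A$ for all $\omega\in\Omega$. $\mathbf{Comeas}(A,B)$ has objects all comeasurings $A\to B\otimes Q$ ($Q$ arbitrary monoid) and morphisms $\rho_1\to\rho_2$ the monoid homomorphisms $\varphi\colon Q_1\to Q_2$ with $(\mathrm{id}_B\otimes\varphi)\rho_1=\rho_2$. A morphism $\rho\colon A\to B\otimes U$ is a tensor epimorphism if $(\mathrm{id}_B\otimes f)\rho=(\mathrm{id}_B\otimes g)\rho$ implies $f=g$ for all $f,g\colon U\to R$. Properties: (1) all small limits exist. (3) (Epi, ExtrMono)-structured: every morphism $f=i\pi$ with $\pi$ epi, $i$ extremal mono, and every commutative square $g\pi=if$ with $\pi$ epi, $i$ extremal mono has $t$ with $it=g$, $t\pi=f$ (a mono $i$ is extremal if every factorization $i=f\pi$ with $\pi$ epi has $\pi$ iso). (4* ) cowellpowered. (5) $f$ mono implies $f\otimes\mathrm{id}_M$ and $\mathrm{id}_M\otimes f$ mono. (5* ) $f$ epi implies $f\otimes\mathrm{id}_M$ and $\mathrm{id}_M\otimes f$ epi. (8) For every nonempty small set $\Lambda$ and objects $M$, $A_\alpha$ ($\alpha\in\Lambda$), the morphism $M\otimes\prod_\alpha A_\alpha\to\prod_\alpha(M\otimes A_\alpha)$ with components $\mathrm{id}_M\otimes\pi_\alpha$ is a monomorphism. (10) The forgetful functor from monoids in $\mathcal C$ to $\mathcal C$ has a left adjoint. *)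

(* Plain Rocq (no library): basic category theory needed for Theorem 4.24.
   All definitions are universe polymorphic: a category C : Category@{o h}
   has objects in Type@{o} and hom-types in Type@{h}; "small" means
   living in Type@{h} (the universe of hom-sets), and the theorem assumes
   h < o so that small-completeness is the usual (non-degenerate) notion. *)
Set Universe Polymorphism.
Unset Implicit Arguments.

Record Category@{o h} := Build_Category {
  Obj :> Type@{o};
  Hom : Obj -> Obj -> Type@{h};
  idm : forall X : Obj, Hom X X;
  comp : forall {X Y Z : Obj}, Hom Y Z -> Hom X Y -> Hom X Z;
  comp_id_l : forall X Y (f : Hom X Y), comp (idm Y) f = f;
  comp_id_r : forall X Y (f : Hom X Y), comp f (idm X) = f;
  comp_assoc : forall W X Y Z (f : Hom W X) (g : Hom X Y) (h : Hom Y Z),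
      comp h (comp g f) = comp (comp h g) f
}.
Arguments Hom {c} X Y.
Arguments idm {c} X.
Arguments comp {c X Y Z} g f.
Notation "g ∘ f" := (comp g f) (at level 40, left associativity).

Definition Mono {C : Category} {X Y : C} (f : Hom X Y) : Prop :=
  forall (W : C) (g h : Hom W X), f ∘ g = f ∘ h -> g = h.

Definition Epi {C : Category} {X Y : C} (f : Hom X Y) : Prop :=
  forall (Z : C) (g h : Hom Y Z), g ∘ f = h ∘ f -> g = h.

Definition IsIso {C : Category} {X Y : C} (f : Hom X Y) : Prop :=
  exists g : Hom Y X, g ∘ f = idm X /\ f ∘ g = idm Y.

Definition ExtrMono {C : Category} {X Y : C} (i : Hom X Y) : Prop :=
  Mono i /\
  forall (Z : C) (pi : Hom X Z) (f : Hom Z Y), Epi pi -> i = f ∘ pi -> IsIso pi.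

Record Functor (J C : Category) := {
  fobj :> J -> C;
  fmap : forall {j k : J}, Hom j k -> Hom (fobj j) (fobj k);
  fmap_id : forall j, fmap (idm j) = idm (fobj j);
  fmap_comp : forall j k l (u : Hom j k) (v : Hom k l),
      fmap (v ∘ u) = fmap v ∘ fmap u
}.
Arguments fmap {J C} f {j k} u.

Definition IsCone {J C : Category} (F : Functor J C) (L : C)
    (pi : forall j : J, Hom L (F j)) : Prop :=
  forall (j k : J) (u : Hom j k), fmap F u ∘ pi j = pi k.

Definition IsLimit {J C : Category} (F : Functor J C) (L : C)
    (pi : forall j : J, Hom L (F j)) : Prop :=
  IsCone F L pi /\
  forall (X : C) (sigma : forall j : J, Hom X (F j)), IsCone F X sigma ->
    exists h : Hom X L, (forall j, pi j ∘ h = sigma j) /\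
      forall h' : Hom X L, (forall j, pi j ∘ h' = sigma j) -> h' = h.

Definition HasSmallLimits@{o h} (C : Category@{o h}) : Prop :=
  forall (J : Category@{h h}) (F : Functor J C),
    exists (L : C) (pi : forall j : J, Hom L (F j)), IsLimit F L pi.

Definition EpiExtrMonoStructured (C : Category) : Prop :=
  (forall (X Y : C) (f : Hom X Y),
     exists (Z : C) (pi : Hom X Z) (i : Hom Z Y), Epi pi /\ ExtrMono i /\ f = i ∘ pi)
  /\
  (forall (X Y Z W : C) (pi : Hom X Y) (i : Hom Z W) (f : Hom X Z) (g : Hom Y W),
     Epi pi -> ExtrMono i -> g ∘ pi = i ∘ f ->
     exists t : Hom Y Z, i ∘ t = g /\ t ∘ pi = f).

Definition Cowellpowered@{o h} (C : Category@{o h}) : Prop :=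
  forall X : C,
    exists (I : Type@{h}) (Y : I -> C) (e : forall i : I, Hom X (Y i)),
      (forall i, Epi (e i)) /\
      forall (Z : C) (f : Hom X Z), Epi f ->
        exists (i : I) (k : Hom (Y i) Z), IsIso k /\ k ∘ e i = f.

Definition IsProduct {C : Category} {L : Type} (A : L -> C) (P : C)
    (pi : forall a : L, Hom P (A a)) : Prop :=
  forall (X : C) (sigma : forall a : L, Hom X (A a)),
    exists h : Hom X P, (forall a, pi a ∘ h = sigma a) /\
      forall h' : Hom X P, (forall a, pi a ∘ h' = sigma a) -> h' = h.

Record Monoidal (C : Category) := {
  tens : C -> C -> C;
  tensm : forall {X X' Y Y' : C}, Hom X X' -> Hom Y Y' -> Hom (tens X Y) (tens X' Y');
  tensm_id : forall X Y : C, tensm (idm X) (idm Y) = idm (tens X Y);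
  tensm_comp : forall X X' X'' Y Y' Y'' (f : Hom X X') (f' : Hom X' X'')
      (g : Hom Y Y') (g' : Hom Y' Y''),
      tensm (f' ∘ f) (g' ∘ g) = tensm f' g' ∘ tensm f g;
  munit : C;
  assoc : forall X Y Z : C, Hom (tens (tens X Y) Z) (tens X (tens Y Z));
  assoc_inv : forall X Y Z : C, Hom (tens X (tens Y Z)) (tens (tens X Y) Z);
  assoc_inv_l : forall X Y Z, assoc_inv X Y Z ∘ assoc X Y Z = idm _;
  assoc_inv_r : forall X Y Z, assoc X Y Z ∘ assoc_inv X Y Z = idm _;
  assoc_nat : forall X X' Y Y' Z Z' (f : Hom X X') (g : Hom Y Y') (h : Hom Z Z'),
      assoc X' Y' Z' ∘ tensm (tensm f g) h = tensm f (tensm g h) ∘ assoc X Y Z;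
  lunit : forall X : C, Hom (tens munit X) X;
  lunit_inv : forall X : C, Hom X (tens munit X);
  lunit_inv_l : forall X, lunit_inv X ∘ lunit X = idm _;
  lunit_inv_r : forall X, lunit X ∘ lunit_inv X = idm _;
  lunit_nat : forall X X' (f : Hom X X'), lunit X' ∘ tensm (idm munit) f = f ∘ lunit X;
  runit : forall X : C, Hom (tens X munit) X;
  runit_inv : forall X : C, Hom X (tens X munit);
  runit_inv_l : forall X, runit_inv X ∘ runit X = idm _;
  runit_inv_r : forall X, runit X ∘ runit_inv X = idm _;
  runit_nat : forall X X' (f : Hom X X'), runit X' ∘ tensm f (idm munit) = f ∘ runit X;
  pentagon : forall W X Y Z : C,
      assoc W X (tens Y Z) ∘ assoc (tens W X) Y Z
      = tensm (idm W) (assoc X Y Z) ∘ assoc W (tens X Y) Z ∘ tensm (assoc W X Y) (idm Z);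
  triangle : forall X Y : C,
      tensm (idm X) (lunit Y) ∘ assoc X munit Y = tensm (runit X) (idm Y)
}.
Arguments tens {C} m X Y.
Arguments tensm {C} m {X X' Y Y'} f g.
Arguments munit {C} m.
Arguments assoc {C} m X Y Z.
Arguments assoc_inv {C} m X Y Z.
Arguments lunit {C} m X.
Arguments lunit_inv {C} m X.
Arguments runit {C} m X.
Arguments runit_inv {C} m X.

Record Braiding {C : Category} (M : Monoidal C) := {
  braid : forall X Y : C, Hom (tens M X Y) (tens M Y X);
  braid_inv : forall X Y : C, Hom (tens M Y X) (tens M X Y);
  braid_inv_l : forall X Y, braid_inv X Y ∘ braid X Y = idm _;
  braid_inv_r : forall X Y, braid X Y ∘ braid_inv X Y = idm _;
  braid_nat : forall X X' Y Y' (f : Hom X X') (g : Hom Y Y'),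
      braid X' Y' ∘ tensm M f g = tensm M g f ∘ braid X Y;
  hexagon1 : forall X Y Z : C,
      assoc M Y Z X ∘ braid X (tens M Y Z) ∘ assoc M X Y Z
      = tensm M (idm Y) (braid X Z) ∘ assoc M Y X Z ∘ tensm M (braid X Y) (idm Z);
  hexagon2 : forall X Y Z : C,
      assoc_inv M Z X Y ∘ braid (tens M X Y) Z ∘ assoc_inv M X Y Z
      = tensm M (braid X Z) (idm Y) ∘ assoc_inv M X Z Y ∘ tensm M (idm X) (braid Y Z)
}.
Arguments braid {C M} b X Y.

Definition TensorPreservesMono {C : Category} (M : Monoidal C) : Prop :=
  forall (X Y N : C) (f : Hom X Y), Mono f ->
    Mono (tensm M f (idm N)) /\ Mono (tensm M (idm N) f).

Definition TensorPreservesEpi {C : Category} (M : Monoidal C) : Prop :=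
  forall (X Y N : C) (f : Hom X Y), Epi f ->
    Epi (tensm M f (idm N)) /\ Epi (tensm M (idm N) f).

Definition TensorProductMono@{o h} {C : Category@{o h}} (M : Monoidal C) : Prop :=
  forall (L : Type@{h}) (N : C) (A : L -> C),
    inhabited L ->
    forall (P : C) (pi : forall a, Hom P (A a)), IsProduct A P pi ->
    forall (P' : C) (pi' : forall a, Hom P' (tens M N (A a))),
      IsProduct (fun a => tens M N (A a)) P' pi' ->
    forall k : Hom (tens M N P) P',
      (forall a, pi' a ∘ k = tensm M (idm N) (pi a)) -> Mono k.

Record Monoid {C : Category} (M : Monoidal C) := {
  mob :> C;
  mmul : Hom (tens M mob mob) mob;
  mone : Hom (munit M) mob;
  mmul_assoc : mmul ∘ tensm M mmul (idm mob)
               = mmul ∘ tensm M (idm mob) mmul ∘ assoc M mob mob mob;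
  mone_l : mmul ∘ tensm M mone (idm mob) = lunit M mob;
  mone_r : mmul ∘ tensm M (idm mob) mone = runit M mob
}.
Arguments mob {C M} m.
Arguments mmul {C M} m.
Arguments mone {C M} m.

Definition IsMonoidHom {C : Category} {M : Monoidal C} (Q1 Q2 : Monoid M)
    (phi : Hom (mob Q1) (mob Q2)) : Prop :=
  phi ∘ mmul Q1 = mmul Q2 ∘ tensm M phi phi /\ phi ∘ mone Q1 = mone Q2.

Definition ForgetfulMonHasLeftAdjoint {C : Category} (M : Monoidal C) : Prop :=
  forall X : C,
    exists (F : Monoid M) (eta : Hom X (mob F)),
      forall (Q : Monoid M) (f : Hom X (mob Q)),
        exists phi : Hom (mob F) (mob Q),
          (IsMonoidHom F Q phi /\ phi ∘ eta = f) /\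
          forall psi : Hom (mob F) (mob Q),
            IsMonoidHom F Q psi /\ psi ∘ eta = f -> psi = phi.

Fixpoint tpow {C : Category} (M : Monoidal C) (X : C) (n : nat) : C :=
  match n with
  | O => munit M
  | S n => tens M (tpow M X n) X
  end.

Record Magma {C : Category} (M : Monoidal C) {Omega : Type} (s t : Omega -> nat) := {
  mcar :> C;
  mop : forall w : Omega, Hom (tpow M mcar (s w)) (tpow M mcar (t w))
}.
Arguments mcar {C M Omega s t} m.
Arguments mop {C M Omega s t} m w.

(* ρ1 ⊗~ ρ2 := (id ⊗ μ)(id ⊗ c_{Q,B2} ⊗ id)(ρ1 ⊗ ρ2), with the associators
   written out explicitly. *)
Definition ttens {C : Category} {M : Monoidal C} (Br : Braiding M) (Q : Monoid M)
    {A1 B1 A2 B2 : C} (r1 : Hom A1 (tens M B1 (mob Q))) (r2 : Hom A2 (tens M B2 (mob Q)))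
    : Hom (tens M A1 A2) (tens M (tens M B1 B2) (mob Q)) :=
  tensm M (idm (tens M B1 B2)) (mmul Q)
  ∘ assoc_inv M B1 B2 (tens M (mob Q) (mob Q))
  ∘ tensm M (idm B1) (assoc M B2 (mob Q) (mob Q))
  ∘ tensm M (idm B1) (tensm M (braid Br (mob Q) B2) (idm (mob Q)))
  ∘ tensm M (idm B1) (assoc_inv M (mob Q) B2 (mob Q))
  ∘ assoc M B1 (mob Q) (tens M B2 (mob Q))
  ∘ tensm M r1 r2.

Fixpoint tpowc {C : Category} {M : Monoidal C} (Br : Braiding M) (Q : Monoid M)
    {A B : C} (r : Hom A (tens M B (mob Q))) (n : nat)
    : Hom (tpow M A n) (tens M (tpow M B n) (mob Q)) :=
  match n with
  | O => lunit_inv M (mob Q) ∘ mone Q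
  | S n => ttens Br Q (tpowc Br Q r n) r
  end.

Definition IsComeasuring {C : Category} {M : Monoidal C} (Br : Braiding M)
    {Omega : Type} {s t : Omega -> nat} (A B : Magma M s t) (Q : Monoid M)
    (r : Hom (mcar A) (tens M (mcar B) (mob Q))) : Prop :=
  forall w : Omega,
    tensm M (mop B w) (idm (mob Q)) ∘ tpowc Br Q r (s w)
    = tpowc Br Q r (t w) ∘ mop A w.

Record Comeasuring {C : Category} {M : Monoidal C} (Br : Braiding M)
    {Omega : Type} {s t : Omega -> nat} (A B : Magma M s t) := {
  cq : Monoid M;
  crho : Hom (mcar A) (tens M (mcar B) (mob cq));
  crho_comeas : IsComeasuring Br A B cq crho
}.
Arguments cq {C M Br Omega s t A B} c.
Arguments crho {C M Br Omega s t A B} c.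

Definition IsComeasMorphism {C : Category} {M : Monoidal C} {Br : Braiding M}
    {Omega : Type} {s t : Omega -> nat} {A B : Magma M s t}
    (r1 r2 : Comeasuring Br A B) (phi : Hom (mob (cq r1)) (mob (cq r2))) : Prop :=
  IsMonoidHom (cq r1) (cq r2) phi /\
  tensm M (idm (mcar B)) phi ∘ crho r1 = crho r2.

Definition TensorEpi {C : Category} (M : Monoidal C) {A B U : C}
    (r : Hom A (tens M B U)) : Prop :=
  forall (R : C) (f g : Hom U R),
    tensm M (idm B) f ∘ r = tensm M (idm B) g ∘ r -> f = g.

Definition InD {C : Category} {M : Monoidal C} {Br : Braiding M}
    {Omega : Type} {s t : Omega -> nat} {A B : Magma M s t} {U : C}
    (rU : Hom (mcar A) (tens M (mcar B) U)) (r : Comeasuring Br A B) : Prop :=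
  exists tau : Hom U (mob (cq r)), tensm M (idm (mcar B)) tau ∘ rU = crho r.

(* D has an initial object (D is full, so its morphisms are those of Comeas) *)
Definition DHasInitial {C : Category} {M : Monoidal C} (Br : Braiding M)
    {Omega : Type} {s t : Omega -> nat} (A B : Magma M s t) {U : C}
    (rU : Hom (mcar A) (tens M (mcar B) U)) : Prop :=
  exists r0 : Comeasuring Br A B,
    InD rU r0 /\
    forall r : Comeasuring Br A B, InD rU r ->
      exists phi : Hom (mob (cq r0)) (mob (cq r)),
        IsComeasMorphism r0 r phi /\
        forall psi, IsComeasMorphism r0 r psi -> psi = phi.

(* Let F be the free monoid on U.  For ρ in D, the free extension F → Q of τ has an
   (Epi, ExtrMono)-image, which inherits a monoid structure by diagonal fill-in; the induced
   morphism into B ⊗ image is a comeasuring because, by (5), tensoring with the mono part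
   reflects the comeasuring equations.  By cowellpoweredness these comeasuring quotients of F
   form a small family.  The image Q0 of F in their product is again such a quotient: by (5)
   and (8) the tensored product projections are jointly monic.  Every ρ in D then receives a
   morphism from Q0, and it is unique since F → Q0 is epi, F is free on U and ρ_U is a
   tensor epimorphism. *)

From Corelib Require Import ssreflect ssrbool.

Set Universe Polymorphism.

Section Categories.
Universes o h.
Context {C : Category@{o h}}.

Lemma comp_eq_postcomp {X Y Z W : C} {a : Hom Y Z} {b : Hom X Y} {c : Hom X Z}
    (k : Hom Z W) : a ∘ b = c -> k ∘ a ∘ b = k ∘ c.
Proof. by move=> E; rewrite -comp_assoc E. Qed.

Ltac cat_norm :=
  repeat rewrite comp_assoc; repeat rewrite comp_id_l; repeat rewrite comp_id_r.

Tactic Notation "crewrite" uconstr(E) :=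
  first [rewrite (comp_eq_postcomp _ E) | rewrite E]; cat_norm.

Lemma epi_comp {X Y Z : C} (f : Hom X Y) (g : Hom Y Z) : Epi f -> Epi g -> Epi (g ∘ f).
Proof. by move=> Hf Hg W a b E; apply: Hg; apply: Hf; rewrite -!comp_assoc. Qed.

Lemma mono_comp {X Y Z : C} (f : Hom X Y) (g : Hom Y Z) : Mono f -> Mono g -> Mono (g ∘ f).
Proof. by move=> Hf Hg W a b E; apply: Hf; apply: Hg; rewrite !comp_assoc. Qed.

Lemma iso_mono {X Y : C} (f : Hom X Y) : IsIso f -> Mono f.
Proof.
  move=> [g [gf _]] W a b E.
  by rewrite -(comp_id_l _ _ _ a) -(comp_id_l _ _ _ b) -gf -!comp_assoc E.
Qed.

Lemma iso_epi {X Y : C} (f : Hom X Y) : IsIso f -> Epi f.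
Proof.
  move=> [g [_ fg]] W a b E.
  by rewrite -(comp_id_r _ _ _ a) -(comp_id_r _ _ _ b) -fg !comp_assoc E.
Qed.

Lemma extrmono_comp_iso {X Y Z : C} (k : Hom X Y) (i : Hom Y Z) :
  IsIso k -> ExtrMono i -> ExtrMono (i ∘ k).
Proof.
  move=> Hk [Hi Hextr]; split; first exact: mono_comp (iso_mono _ Hk) Hi.
  move: Hk => [kinv [kinv_k k_kinv]] W pi f Hpi E.
  have Hkinv : IsIso kinv by exists k.
  have [u [u_pik pik_u]] : IsIso (pi ∘ kinv).
  { apply: (Hextr _ _ f); first exact: epi_comp (iso_epi _ Hkinv) Hpi.
    by rewrite comp_assoc -E -comp_assoc k_kinv comp_id_r. }
  exists (kinv ∘ u); split.
  - have u_pi : u ∘ pi = k.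
    { by rewrite -(comp_id_r _ _ _ (u ∘ pi)) -kinv_k comp_assoc
        -(comp_assoc _ _ _ _ _ kinv pi u) u_pik comp_id_l. }
    by rewrite -comp_assoc u_pi.
  - by rewrite comp_assoc.
Qed.

Definition EpiRepresentatives {X : C} {I : Type} {Y : I -> C} (e : forall i, Hom X (Y i)) : Prop :=
  forall (Z : C) (f : Hom X Z), Epi f -> exists (i : I) (k : Hom (Y i) Z), IsIso k /\ k ∘ e i = f.

Definition JointlyMono {L : Type} {X : C} {Y : L -> C} (f : forall d, Hom X (Y d)) : Prop :=
  forall (W : C) (g g' : Hom W X), (forall d, f d ∘ g = f d ∘ g') -> g = g'.

Lemma mono_jointly_mono {X Y : C} (f : Hom X Y) : Mono f -> JointlyMono (fun _ : unit => f).
Proof. by move=> Hf W g g' E; apply: Hf; apply: (E tt). Qed.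

Lemma jointly_mono_comp_mono {L : Type} {X X' : C} {Y : L -> C}
    (f : forall d, Hom X (Y d)) (m : Hom X' X) :
  JointlyMono f -> Mono m -> JointlyMono (fun d => f d ∘ m).
Proof. by move=> Hf Hm W g g' E; apply: Hm; apply: Hf => d; rewrite !comp_assoc. Qed.

Lemma product_jointly_mono {L : Type} (X : L -> C) (P : C) (p : forall d, Hom P (X d)) :
  IsProduct X P p -> JointlyMono p.
Proof.
  move=> HP W g g' E.
  have [k [_ Hk]] := HP W (fun d => p d ∘ g').
  by rewrite (Hk g E) (Hk g' (fun d => eq_refl)).
Qed.

Definition discrete_category@{u} (L : Type@{u}) : Category@{u u}.
Proof.
  refine (@Build_Category L (fun j k => j = k) (fun j => eq_refl)
           (fun _ _ _ g f => eq_trans f g) _ _ _).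
  - by [].
  - by move=> X Y f; destruct f.
  - by move=> W X Y Z f g k; destruct f, g, k.
Defined.

Definition discrete_diagram {L : Type@{h}} (X : L -> C) : Functor (discrete_category L) C.
Proof.
  refine (@Build_Functor (discrete_category L) C X
    (fun j k (u : j = k) =>
       match u in _ = k return Hom (X j) (X k) with eq_refl => idm (X j) end) _ _).
  - by [].
  - by move=> j k l u v; destruct u, v; rewrite /= comp_id_l.
Defined.

Lemma has_small_products : HasSmallLimits C ->
  forall (L : Type@{h}) (X : L -> C), exists P p, IsProduct X P p.
Proof.
  move=> Hlim L X.
  have [P [p [_ Hlimit]]] := Hlim _ (discrete_diagram X).
  exists P, p => W sigma.
  apply: Hlimit => j k u; destruct u; exact: comp_id_l.
Qed.

Context (M : Monoidal C).
Local Notation "f ⊗ g" := (tensm M f g) (at level 35).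

Lemma comp_tensm {X X' X'' Y Y' Y'' : C}
    (f : Hom X X') (f' : Hom X' X'') (g : Hom Y Y') (g' : Hom Y' Y'') :
  (f' ⊗ g') ∘ (f ⊗ g) = (f' ∘ f) ⊗ (g' ∘ g).
Proof. by rewrite tensm_comp. Qed.

Lemma tensm_slide {X Y Z W X' Y' Z' W' : C}
    (a : Hom Y Z) (b : Hom X Y) (c : Hom W Z) (d : Hom X W)
    (a' : Hom Y' Z') (b' : Hom X' Y') (c' : Hom W' Z') (d' : Hom X' W') :
  a ∘ b = c ∘ d -> a' ∘ b' = c' ∘ d' -> (a ⊗ a') ∘ (b ⊗ b') = (c ⊗ c') ∘ (d ⊗ d').
Proof. by move=> E E'; rewrite !comp_tensm E E'. Qed.

Lemma tensm_slide_r {V X Y Z W : C} (a : Hom Y Z) (b : Hom X Y) (c : Hom W Z) (d : Hom X W) :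
  a ∘ b = c ∘ d -> (idm V ⊗ a) ∘ (idm V ⊗ b) = (idm V ⊗ c) ∘ (idm V ⊗ d).
Proof. by move=> E; apply: tensm_slide. Qed.

Lemma id_slide {X Y : C} (f : Hom X Y) : idm Y ∘ f = f ∘ idm X.
Proof. by rewrite comp_id_l comp_id_r. Qed.

Lemma tensor_product_jointly_mono (H1 : HasSmallLimits C) (H8 : TensorProductMono M)
    (L : Type@{h}) (X : L -> C) (P : C) (p : forall d, Hom P (X d)) :
  inhabited L -> IsProduct X P p -> forall N : C, JointlyMono (fun d => idm N ⊗ p d).
Proof.
  move=> HL HP N.
  have [P' [p' HP']] := has_small_products H1 L (fun d => tens M N (X d)).
  have [k [p'_k _]] := HP' _ (fun d => idm N ⊗ p d).
  have Hk : Mono k := H8 L N X HL P p HP P' p' HP' k p'_k.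
  move=> W g g' E; apply: Hk; apply: (product_jointly_mono _ _ _ HP') => d.
  by rewrite !comp_assoc p'_k.
Qed.

Lemma tensm_epi (H5s : TensorPreservesEpi M) {X Y X' Y' : C} (f : Hom X Y) (g : Hom X' Y') :
  Epi f -> Epi g -> Epi (f ⊗ g).
Proof.
  move=> Hf Hg.
  have -> : f ⊗ g = (f ⊗ idm Y') ∘ (idm X ⊗ g) by rewrite comp_tensm comp_id_l comp_id_r.
  exact: epi_comp (proj2 (H5s _ _ _ g Hg)) (proj1 (H5s _ _ _ f Hf)).
Qed.

Lemma lunit_inv_nat {X X' : C} (f : Hom X X') :
  lunit_inv M X' ∘ f = (idm _ ⊗ f) ∘ lunit_inv M X.
Proof.
  transitivity (lunit_inv M X' ∘ (lunit M X' ∘ (idm _ ⊗ f)) ∘ lunit_inv M X).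
  - by rewrite lunit_nat; cat_norm; crewrite (lunit_inv_r _ _ _).
  - by cat_norm; rewrite lunit_inv_l comp_id_l.
Qed.

Lemma assoc_inv_nat {X X' Y Y' Z Z' : C} (f : Hom X X') (g : Hom Y Y') (k : Hom Z Z') :
  assoc_inv M X' Y' Z' ∘ (f ⊗ (g ⊗ k)) = ((f ⊗ g) ⊗ k) ∘ assoc_inv M X Y Z.
Proof.
  transitivity (assoc_inv M X' Y' Z' ∘ (assoc M X' Y' Z' ∘ ((f ⊗ g) ⊗ k)) ∘ assoc_inv M X Y Z).
  - by rewrite assoc_nat; cat_norm; crewrite (assoc_inv_r _ _ _ _ _).
  - by cat_norm; rewrite assoc_inv_l comp_id_l.
Qed.

Definition IsFreeMonoidOn {X : C} (F : Monoid M) (eta : Hom X F) : Prop :=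
  forall (Q : Monoid M) (f : Hom X Q),
    exists phi : Hom F Q, (IsMonoidHom F Q phi /\ phi ∘ eta = f) /\
      forall psi : Hom F Q, IsMonoidHom F Q psi /\ psi ∘ eta = f -> psi = phi.

Lemma free_monoid_hom_ext {X : C} (F Q : Monoid M) (eta : Hom X F) (phi psi : Hom F Q) :
  IsFreeMonoidOn F eta -> IsMonoidHom F Q phi -> IsMonoidHom F Q psi ->
  phi ∘ eta = psi ∘ eta -> phi = psi.
Proof.
  move=> Hfree Hphi Hpsi E.
  have [chi [_ Hchi]] := Hfree Q (psi ∘ eta).
  by rewrite (Hchi phi (conj Hphi E)) (Hchi psi (conj Hpsi eq_refl)).
Qed.

Lemma monoid_hom_comp (Q1 Q2 Q3 : Monoid M) (f : Hom Q1 Q2) (g : Hom Q2 Q3) :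
  IsMonoidHom Q1 Q2 f -> IsMonoidHom Q2 Q3 g -> IsMonoidHom Q1 Q3 (g ∘ f).
Proof.
  move=> [f_mul f_one] [g_mul g_one]; split.
  - by rewrite -comp_assoc f_mul comp_assoc g_mul -comp_assoc comp_tensm.
  - by rewrite -comp_assoc f_one g_one.
Qed.

Section QuotientMonoid.
Hypothesis H5s : TensorPreservesEpi M.
Variables (F : Monoid M) (Y : C) (e : Hom F Y) (He : Epi e) (mul : Hom (tens M Y Y) Y).
Hypothesis mul_e : mul ∘ (e ⊗ e) = e ∘ mmul F.

Lemma quotient_mul_assoc : mul ∘ (mul ⊗ idm Y) = mul ∘ (idm Y ⊗ mul) ∘ assoc M Y Y Y.
Proof.
  apply: (tensm_epi H5s _ _ (tensm_epi H5s _ _ He He) He).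
  transitivity (e ∘ mmul F ∘ (mmul F ⊗ idm F)).
  - rewrite -comp_assoc comp_tensm comp_id_l mul_e.
    have -> : (e ∘ mmul F) ⊗ e = (e ⊗ e) ∘ (mmul F ⊗ idm F) by rewrite comp_tensm comp_id_r.
    by cat_norm; rewrite mul_e.
  - rewrite -comp_assoc mmul_assoc; cat_norm.
    crewrite (assoc_nat _ _ _ _ _ _ _ _ _ _ _).
    crewrite (comp_tensm _ _ _ _); rewrite mul_e.
    have -> : e ⊗ (e ∘ mmul F) = (e ⊗ e) ∘ (idm F ⊗ mmul F) by rewrite comp_tensm comp_id_r.
    by cat_norm; rewrite mul_e.
Qed.

Lemma quotient_mone_l : mul ∘ ((e ∘ mone F) ⊗ idm Y) = lunit M Y.
Proof.
  apply: (proj2 (H5s _ _ (munit M) e He)).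
  rewrite lunit_nat -(mone_l _ F); cat_norm.
  crewrite (comp_tensm _ _ _ _).
  have -> : (e ∘ mone F) ⊗ e = (e ⊗ e) ∘ (mone F ⊗ idm F) by rewrite comp_tensm comp_id_r.
  by cat_norm; rewrite mul_e.
Qed.

Lemma quotient_mone_r : mul ∘ (idm Y ⊗ (e ∘ mone F)) = runit M Y.
Proof.
  apply: (proj1 (H5s _ _ (munit M) e He)).
  rewrite runit_nat -(mone_r _ F); cat_norm.
  crewrite (comp_tensm _ _ _ _).
  have -> : e ⊗ (e ∘ mone F) = (e ⊗ e) ∘ (idm F ⊗ mone F) by rewrite comp_tensm comp_id_r.
  by cat_norm; rewrite mul_e.
Qed.

Definition quotient_monoid : Monoid M :=
  Build_Monoid C M Y mul (e ∘ mone F) quotient_mul_assoc quotient_mone_l quotient_mone_r.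

Lemma quotient_monoid_hom : IsMonoidHom F quotient_monoid e.
Proof. by split. Qed.

Lemma quotient_monoid_hom_out (Q : Monoid M) (m : Hom Y Q) :
  IsMonoidHom F Q (m ∘ e) -> m ∘ mul = mmul Q ∘ (m ⊗ m) -> IsMonoidHom quotient_monoid Q m.
Proof. by move=> [_ me_one] m_mul; split; rewrite //= comp_assoc. Qed.

End QuotientMonoid.

Lemma quotient_mul_lift (H3 : EpiExtrMonoStructured C) (H5s : TensorPreservesEpi M)
    (F : Monoid M) {Y P : C} (e : Hom F Y) (i : Hom Y P) (g : Hom (tens M Y Y) P) :
  Epi e -> ExtrMono i -> g ∘ (e ⊗ e) = i ∘ (e ∘ mmul F) ->
  exists mul, mul ∘ (e ⊗ e) = e ∘ mmul F /\ i ∘ mul = g.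
Proof.
  move=> He Hi E.
  have [mul [i_mul mul_e]] :=
    proj2 H3 _ _ _ _ (e ⊗ e) i (e ∘ mmul F) g (tensm_epi H5s _ _ He He) Hi E.
  by exists mul.
Qed.

Section Comeasurings.
Context (Br : Braiding M) {Omega : Type} {s t : Omega -> nat} (A B : Magma M s t).

Lemma ttens_monoid_hom (Q Q' : Monoid M) (psi : Hom Q Q') {A1 B1 A2 B2 : C}
    (r1 : Hom A1 (tens M B1 Q)) (r2 : Hom A2 (tens M B2 Q)) :
  IsMonoidHom Q Q' psi ->
  (idm (tens M B1 B2) ⊗ psi) ∘ ttens Br Q r1 r2
  = ttens Br Q' ((idm B1 ⊗ psi) ∘ r1) ((idm B2 ⊗ psi) ∘ r2).
Proof.
  move=> [psi_mul _]; rewrite /ttens -(comp_tensm r1 _ r2 _); cat_norm.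
  crewrite (assoc_nat _ _ _ _ _ _ _ _ _ _ _).
  crewrite (tensm_slide_r _ _ _ _ (assoc_inv_nat psi (idm B2) psi)).
  crewrite (tensm_slide_r _ _ _ _
    (tensm_slide _ _ _ _ _ _ _ _ (braid_nat _ Br _ _ _ _ psi (idm B2)) (id_slide psi))).
  crewrite (tensm_slide_r _ _ _ _ (assoc_nat _ _ _ _ _ _ _ _ (idm B2) psi psi)).
  crewrite (assoc_inv_nat _ _ _); rewrite tensm_id.
  crewrite (comp_tensm _ _ (psi ⊗ psi) (mmul Q')); rewrite -psi_mul.
  crewrite (comp_tensm _ _ (mmul Q) psi).
  by crewrite (comp_tensm _ _ _ _).
Qed.

Lemma tpowc_monoid_hom (Q Q' : Monoid M) (psi : Hom Q Q') {X Z : C}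
    (r : Hom X (tens M Z Q)) (n : nat) :
  IsMonoidHom Q Q' psi ->
  (idm (tpow M Z n) ⊗ psi) ∘ tpowc Br Q r n = tpowc Br Q' ((idm Z ⊗ psi) ∘ r) n.
Proof.
  move=> Hpsi; elim: n => [|n IH] /=.
  - by cat_norm; rewrite -lunit_inv_nat -comp_assoc (proj2 Hpsi).
  - by rewrite ttens_monoid_hom // IH.
Qed.

Lemma comeasuring_of_jointly_mono {L : Type} (Q : Monoid M) (Qd : L -> Monoid M)
    (psi : forall d, Hom Q (Qd d)) (r : Hom A (tens M B Q)) :
  (forall d, IsMonoidHom Q (Qd d) (psi d)) ->
  (forall N : C, JointlyMono (fun d => idm N ⊗ psi d)) ->
  (forall d, IsComeasuring Br A B (Qd d) ((idm B ⊗ psi d) ∘ r)) ->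
  IsComeasuring Br A B Q r.
Proof.
  move=> Hpsi Hjm Hr w; apply: Hjm => d.
  have push : (idm _ ⊗ psi d) ∘ (mop B w ⊗ idm Q) = (mop B w ⊗ idm (Qd d)) ∘ (idm _ ⊗ psi d).
  { by rewrite !comp_tensm !comp_id_l !comp_id_r. }
  rewrite comp_assoc push -comp_assoc tpowc_monoid_hom // (Hr d w).
  by rewrite comp_assoc tpowc_monoid_hom.
Qed.

Lemma comeasuring_of_mono (Q Q' : Monoid M) (psi : Hom Q Q') (r : Hom A (tens M B Q)) :
  IsMonoidHom Q Q' psi -> (forall N : C, Mono (idm N ⊗ psi)) ->
  IsComeasuring Br A B Q' ((idm B ⊗ psi) ∘ r) -> IsComeasuring Br A B Q r.
Proof.
  move=> Hpsi Hmono Hr.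
  apply: (comeasuring_of_jointly_mono Q (fun _ : unit => Q') (fun _ => psi)) => // N.
  exact: mono_jointly_mono.
Qed.

Lemma initial_comeasuring_of_free_quotient {U : C} (rU : Hom A (tens M B U))
    (F : Monoid M) (eta : Hom U F) (Q0 : Monoid M) (pi0 : Hom F Q0) :
  IsFreeMonoidOn F eta -> TensorEpi M rU -> Epi pi0 -> IsMonoidHom F Q0 pi0 ->
  IsComeasuring Br A B Q0 ((idm B ⊗ pi0) ∘ ((idm B ⊗ eta) ∘ rU)) ->
  (forall (r : Comeasuring Br A B) (tau : Hom U (cq r)), (idm B ⊗ tau) ∘ rU = crho r ->
     exists g, IsMonoidHom Q0 (cq r) g /\ g ∘ (pi0 ∘ eta) = tau) ->
  DHasInitial Br A B rU.
Proof.
  move=> Hfree HrU Hpi0 Hpi0_hom Hrho0 Hweak.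
  have rho0_eq : (idm B ⊗ pi0) ∘ ((idm B ⊗ eta) ∘ rU) = (idm B ⊗ (pi0 ∘ eta)) ∘ rU.
  { by rewrite comp_assoc comp_tensm comp_id_l. }
  exists (@Build_Comeasuring C M Br Omega s t A B Q0 _ Hrho0); split.
  { by exists (pi0 ∘ eta). }
  move=> r [tau Htau].
  have [g [Hg g_tau]] := Hweak r tau Htau.
  exists g; split.
  { by split; rewrite //= rho0_eq comp_assoc comp_tensm comp_id_l g_tau. }
  move=> psi [Hpsi psi_rho]; simpl in psi_rho.
  apply: Hpi0; apply: (free_monoid_hom_ext _ _ eta _ _ Hfree
    (monoid_hom_comp _ _ _ _ _ Hpi0_hom Hpsi) (monoid_hom_comp _ _ _ _ _ Hpi0_hom Hg)).
  apply: HrU; rewrite -!comp_assoc g_tau Htau -psi_rho rho0_eq.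
  by rewrite (comp_assoc _ _ _ _ _ rU) comp_tensm comp_id_l.
Qed.

Section ComeasQuotients.
Hypotheses (H1 : HasSmallLimits C) (H3 : EpiExtrMonoStructured C)
  (H5 : TensorPreservesMono M) (H5s : TensorPreservesEpi M) (H8 : TensorProductMono M).
Variables (F : Monoid M) (r0 : Hom A (tens M B F)).

Record ComeasQuotient {Y : C} (e : Hom F Y) (He : Epi e) := {
  qmul : Hom (tens M Y Y) Y;
  qmul_e : qmul ∘ (e ⊗ e) = e ∘ mmul F;
  qcomeas : IsComeasuring Br A B (quotient_monoid H5s F Y e He qmul qmul_e) ((idm B ⊗ e) ∘ r0)
}.

Definition comeas_quotient_monoid {Y : C} {e : Hom F Y} {He : Epi e}
    (c : ComeasQuotient e He) : Monoid M :=
  quotient_monoid H5s F Y e He (qmul e He c) (qmul_e e He c).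

Lemma comeas_quotient_monoid_hom {Y : C} {e : Hom F Y} {He : Epi e} (c : ComeasQuotient e He) :
  IsMonoidHom F (comeas_quotient_monoid c) e.
Proof. exact: quotient_monoid_hom. Qed.

Lemma comeasuring_factors_through_quotient {I : Type} {Y : I -> C}
    (e : forall i, Hom F (Y i)) (He : forall i, Epi (e i)) :
  EpiRepresentatives e ->
  forall (Q : Monoid M) (phi : Hom F Q),
    IsMonoidHom F Q phi -> IsComeasuring Br A B Q ((idm B ⊗ phi) ∘ r0) ->
    exists (i : I) (c : ComeasQuotient (e i) (He i)) (m : Hom (Y i) Q),
      IsMonoidHom (comeas_quotient_monoid c) Q m /\ m ∘ e i = phi.
Proof.
  move=> Hrep Q phi Hphi Hcomeas.
  have [Z [pi [i [Hpi [Hi phi_eq]]]]] := proj1 H3 _ _ phi.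
  have [j [k [Hk k_e]]] := Hrep Z pi Hpi.
  have m_e : (i ∘ k) ∘ e j = phi by rewrite -comp_assoc k_e.
  have Hm : ExtrMono (i ∘ k) := extrmono_comp_iso k i Hk Hi.
  have square : mmul Q ∘ ((i ∘ k) ⊗ (i ∘ k)) ∘ (e j ⊗ e j) = (i ∘ k) ∘ (e j ∘ mmul F).
  { by rewrite -comp_assoc comp_tensm m_e -(proj1 Hphi) comp_assoc m_e. }
  have [mul [mul_e m_mul]] := quotient_mul_lift H3 H5s F (e j) (i ∘ k) _ (He j) Hm square.
  have Hm_hom : IsMonoidHom (quotient_monoid H5s F _ (e j) (He j) mul mul_e) Q (i ∘ k).
  { by apply: quotient_monoid_hom_out; rewrite ?m_e. }
  have Hc : IsComeasuring Br A B (quotient_monoid H5s F _ (e j) (He j) mul mul_e)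
              ((idm B ⊗ e j) ∘ r0).
  { apply: (comeasuring_of_mono _ _ _ _ Hm_hom).
    - by move=> N; apply: (proj2 (H5 _ _ N _ (proj1 Hm))).
    - by rewrite comp_assoc comp_tensm comp_id_l m_e. }
  by exists j, (@Build_ComeasQuotient _ (e j) (He j) mul mul_e Hc), (i ∘ k).
Qed.

Lemma comeasuring_image_in_product (L : Type@{h}) (Qd : L -> Monoid M)
    (f : forall d, Hom F (Qd d)) :
  inhabited L -> (forall d, IsMonoidHom F (Qd d) (f d)) ->
  (forall d, IsComeasuring Br A B (Qd d) ((idm B ⊗ f d) ∘ r0)) ->
  exists (Q0 : Monoid M) (pi0 : Hom F Q0),
    [/\ Epi pi0, IsMonoidHom F Q0 pi0, IsComeasuring Br A B Q0 ((idm B ⊗ pi0) ∘ r0)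
       & forall d, exists q, IsMonoidHom Q0 (Qd d) q /\ q ∘ pi0 = f d].
Proof.
  move=> HL Hf Hcomeas.
  have [P [p HP]] := has_small_products H1 L (fun d => mob (Qd d)).
  have [Phi [p_Phi _]] := HP F f.
  have [Y [pi0 [i0 [Hpi0 [Hi0 Phi_eq]]]]] := proj1 H3 _ _ Phi.
  have q_pi0 : forall d, p d ∘ i0 ∘ pi0 = f d by move=> d; rewrite -comp_assoc -Phi_eq.
  have [g [p_g _]] := HP _ (fun d => mmul (Qd d) ∘ ((p d ∘ i0) ⊗ (p d ∘ i0))).
  have square : g ∘ (pi0 ⊗ pi0) = i0 ∘ (pi0 ∘ mmul F).
  { apply: (product_jointly_mono _ _ _ HP) => d.
    by rewrite !comp_assoc p_g -comp_assoc comp_tensm !q_pi0 -(proj1 (Hf d)). }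
  have [mul [mul_e i0_mul]] := quotient_mul_lift H3 H5s F pi0 i0 g Hpi0 Hi0 square.
  pose Q0 := quotient_monoid H5s F Y pi0 Hpi0 mul mul_e.
  have Hq : forall d, IsMonoidHom Q0 (Qd d) (p d ∘ i0).
  { move=> d; apply: quotient_monoid_hom_out; first by rewrite q_pi0.
    by rewrite -comp_assoc i0_mul p_g. }
  exists Q0, pi0; split; [exact: Hpi0 | exact: quotient_monoid_hom | |].
  - apply: (comeasuring_of_jointly_mono _ _ _ _ Hq).
    + move=> N W k k' E.
      apply: (jointly_mono_comp_mono _ _ (tensor_product_jointly_mono H1 H8 _ _ _ _ HL HP N)
                (proj2 (H5 _ _ N _ (proj1 Hi0)))) => d.
      by rewrite comp_tensm comp_id_l E.
    + by move=> d; rewrite comp_assoc comp_tensm comp_id_l q_pi0.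
  - by move=> d; exists (p d ∘ i0).
Qed.

End ComeasQuotients.

End Comeasurings.

End Categories.

Unset Universe Polymorphism.

Theorem theorem4p24@{o h | h < o +}
    (C : Category@{o h}) (M : Monoidal C) (Br : Braiding M)
    (H1 : HasSmallLimits C)
    (H3 : EpiExtrMonoStructured C)
    (H4s : Cowellpowered C)
    (H5 : TensorPreservesMono M)
    (H5s : TensorPreservesEpi M)
    (H8 : TensorProductMono M)
    (H10 : ForgetfulMonHasLeftAdjoint M)
    (Omega : Type@{h}) (s t : Omega -> nat)
    (A B : Magma M s t) (U : C)
    (rU : Hom (mcar A) (tens M (mcar B) U))
    (HrU : TensorEpi M rU)
    (Hne : exists r : Comeasuring Br A B, InD rU r) :
  DHasInitial Br A B rU.
Proof.
  have [F [eta Hfree]] := H10 U.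
  have [I [Y [e [He Hrep]]]] := H4s F.
  pose r0 := tensm M (idm B) eta ∘ rU.
  have Hfactor := comeasuring_factors_through_quotient M Br A B H3 H5 H5s F r0 e He Hrep.
  have comeas_in_D : forall (r : Comeasuring Br A B) tau phi,
      tensm M (idm B) tau ∘ rU = crho r -> phi ∘ eta = tau ->
      IsComeasuring Br A B (cq r) (tensm M (idm B) phi ∘ r0).
  { move=> r tau phi Htau phi_eta.
    rewrite /r0 comp_assoc comp_tensm comp_id_l phi_eta Htau; exact: crho_comeas. }
  pose L := {i : I & ComeasQuotient M Br A B H5s F r0 (e i) (He i)}.
  have HL : inhabited L.
  { have [r [tau Htau]] := Hne.
    have [phi [[Hphi phi_eta] _]] := Hfree (cq r) tau.
    have [i [c _]] := Hfactor _ phi Hphi (comeas_in_D r tau phi Htau phi_eta).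
    exact: inhabits (existT _ i c). }
  have [Q0 [pi0 [Hpi0 Hpi0_hom Hrho0 Hq]]] :=
    comeasuring_image_in_product M Br A B H1 H3 H5 H5s H8 F r0 L
      (fun d => comeas_quotient_monoid M Br A B H5s F r0 (projT2 d)) (fun d => e (projT1 d)) HL
      (fun d => comeas_quotient_monoid_hom M Br A B H5s F r0 (projT2 d))
      (fun d => qcomeas M Br A B H5s F r0 _ _ (projT2 d)).
  apply: (initial_comeasuring_of_free_quotient M Br A B rU F eta Q0 pi0
            Hfree HrU Hpi0 Hpi0_hom Hrho0).
  move=> r tau Htau.
  have [phi [[Hphi phi_eta] _]] := Hfree (cq r) tau.
  have [i [c [m [Hm m_e]]]] := Hfactor _ phi Hphi (comeas_in_D r tau phi Htau phi_eta).
  have [q [Hq_hom q_pi0]] := Hq (existT _ i c).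
  exists (m ∘ q); split; first exact: monoid_hom_comp Hq_hom Hm.
  by rewrite comp_assoc -(comp_assoc _ _ _ _ _ pi0 q m) q_pi0 m_e.
Qed.
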